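(* Under the standing assumptions, for every demand vector $\vec v$ with at least four non-zero entries, there is at most one task of type 1 with respect to $\vec v$.
   Context: Standing assumptions: $n\ge 4$, $k\ge 5$, and $f_1,\dots,f_n$ are functions from demand vectors to $[k]$ satisfying the demand (for every demand vector $\vec v$ and task $j$, exactly $v_j$ agents $a$ have $f_a(\vec v)=j$), with maximum switching cost at most $2$. A demand vector is $\vec v=(v_1,\dots,v_k)$ of non-negative integers with $\sum v_j=n$; task $j$ is non-empty in $\vec v$ if $v_j\ge1$. The switching cost of $(\vec v,\vec v')$ is the number of agents $a$ with $f_a(\vec v)\ne f_a(\vec v')$; $\vec v,\vec v'$ are adjacent if $\|\vec v-\vec v'\|_1=2$. An ordered pair $(\vec v_1,\vec v_2)$ is $(s,t)$-adjacent if $s\ne t$ and $\vec v_2$ is obtained from $\vec v_1$ by moving one unit of demand from task $s$ to task $t$. Agent $a$ is $(i,j)$-mobile with respect to $(\vec v_1,\vec v_2)$ if $f_a(\vec v_1)=i$, $f_a(\vec v_2)=j$, $i\ne j$. If $(\vec v_1,\vec v_2)$ is $(s,t)$-adjacent with switching cost $2$, then there is a task $i\notin\{s,t\}$ such that one switching agent is $(s,i)$-mobile and the other is $(i,t)$-mobile; $i$ is called the intermediate task of $(\vec v_1,\vec v_2)$. A task $t$ is of type 1 with respect to $\vec v$ if for every task $s\ne t$ non-empty in $\vec v$, the $(s,t)$-adjacent pair starting at $\vec v$ has switching cost $1$. A task $t$ is of type 2 with respect to $\vec v$ if there exist a task $i$ and an agent $a$ such that for every task $s\notin\{i,t\}$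 non-empty in $\vec v$, the $(s,t)$-adjacent pair starting at $\vec v$ has switching cost $2$, intermediate task $i$, and $(i,t)$-mobile agent $a$; then $i$ is the intermediate task of $t$ with respect to $\vec v$. *)

From mathcomp Require Import all_boot.
Set Implicit Arguments. Unset Strict Implicit. Unset Printing Implicit Defensive.

(* Tasks are 'I_k (task j <-> ordinal j), agents are 'I_n.
   A vector is a finite function 'I_k -> nat; a demand vector is one summing to n. *)
Definition vec (k : nat) := {ffun 'I_k -> nat}.

Definition is_demand (n k : nat) (v : vec k) : bool := \sum_(j < k) v j == n.

(* An assignment: f a v is the task of agent a for vector v. Only its values on
   demand vectors matter. *)
Definition assignment (n k : nat) := 'I_n -> vec k -> 'I_k.

Definition satisfies_demand (n k : nat) (f : assignment n k) : Prop :=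
  forall v : vec k, is_demand n v ->
    forall j : 'I_k, #|[set a : 'I_n | f a v == j]| = v j.

Definition switching_cost (n k : nat) (f : assignment n k) (v v' : vec k) : nat :=
  #|[set a : 'I_n | f a v != f a v']|.

Definition l1dist (k : nat) (v v' : vec k) : nat :=
  \sum_(j < k) ((v j - v' j) + (v' j - v j)).

Definition adjacent (k : nat) (v v' : vec k) : bool := l1dist v v' == 2.

Definition max_switching_cost_le2 (n k : nat) (f : assignment n k) : Prop :=
  forall v v' : vec k, is_demand n v -> is_demand n v' -> adjacent v v' ->
    switching_cost f v v' <= 2.

Definition move (k : nat) (v : vec k) (s t : 'I_k) : vec k :=
  [ffun j => v j - (j == s) + (j == t)].

Definition type1 (n k : nat) (f : assignment n k) (v : vec k) (t : 'I_k) : Prop :=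
  forall s : 'I_k, s != t -> 0 < v s -> switching_cost f v (move v s t) = 1.

From mathcomp Require Import all_boot zify.
Set Implicit Arguments. Unset Strict Implicit. Unset Printing Implicit Defensive.

(* Fix a demand vector v.  Restricting the assignment to one demand vector
   gives a configuration g : agents -> tasks; [dist g h] counts the agents
   placed differently by g and h (the switching cost) and [load g j] the
   agents at task j.
   - If t is of type 1 and s is non-empty, moving a unit of demand from s to
     t relocates a single agent, the mover of s (type1_mover).
   - For non-empty s, s' and a fifth task r, the vector w obtained by moving
     one unit from s to t and one from s' to r is adjacent to both
     single-move vectors; switching cost at most 2 then forces the
     transition v -> w to be [direct] (the two movers go to t and r) or a
     [chain] (both movers go to t and an agent of t goes to r)
     (classify_transition, pair_transition).
   - With three non-empty tasks s1, s2, s3, the transition for (s2, s3)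
     cannot be direct: the three transitions would be pairwise adjacent and
     the positions of the movers would have to alternate around an odd
     cycle (no_direct_triangle).  So it is a chain (type1_chain).
   - A chain for t1 is incompatible with a second type-1 task t2: if
     v t2 = 0 take r = t2 and compare with the single move to t2; otherwise
     take s1 = t2, a fresh fifth task r (k >= 5), and compare with the
     transition of the same pair towards t2.  Either way three agents
     switch between adjacent vectors. *)

(* [by_index U] proves a pointwise identity between vectors built from
   indicator terms, by case analysis on the index; U : uniq [:: ...] states
   that the task indices involved are pairwise distinct. *)
Ltac by_index U :=
  move: U; rewrite /= ?inE ?negb_or -?andbA;
  repeat (case/andP => /eqP ?); move=> _ j; rewrite !ffunE;
  repeat match goal with |- context [?x == ?y] => case: (x =P y) => [?|?]; [try subst|] end;
  rewrite /=; try congruence; lia.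

(* [distinct] proves a goal [x != y] or [uniq l] from pairwise
   inequalities in the context; [distinct_from U] first extracts them from
   U : uniq l'. *)
Ltac distinct :=
  rewrite /= ?inE ?negb_or -?andbA; repeat (apply/andP; split);
  first [done | assumption | rewrite eq_sym; assumption].

Ltac distinct_from U :=
  have := U; rewrite /= ?inE ?negb_or -?andbA;
  repeat (case/andP => ?); move=> _; distinct.

Lemma cardsD1_lb (T : finType) (A : {set T}) x : #|A| <= #|A :\ x| + 1.
Proof. by rewrite (cardsD1 x A) addnC leq_add2l leq_b1. Qed.

Lemma exists_fresh (T : finType) (s : seq T) : size s < #|T| -> exists x, x \notin s.
Proof.
move=> small; have : ~~ (T \subset s).
  by apply: contraTN small => /subset_leq_card Ts; rewrite -leqNgt (leq_trans Ts) ?card_size.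
by case/subsetPn => x _ xs; exists x.
Qed.

Section Configurations.
Variables n k : nat.
Implicit Types (g h : 'I_n -> 'I_k) (a b c x y z : 'I_n) (j s t r : 'I_k).

Definition load g j := #|[set a | g a == j]|.
Definition dist g h := #|[set a | g a != h a]|.

Lemma dist_sym g h : dist g h = dist h g.
Proof. by apply: eq_card => a; rewrite !inE eq_sym. Qed.

Lemma dist_gt2 g h x y z :
  g x != h x -> g y != h y -> g z != h z -> x != y -> y != z -> z != x ->
  2 < dist g h.
Proof. by move=> *; apply/card_gt2P; exists x, y, z; rewrite !inE. Qed.

Lemma dist_le2_no_three g h x y z :
  dist g h <= 2 -> g x != h x -> g y != h y -> g z != h z ->
  x != y -> y != z -> z != x -> False.
Proof.
by move=> D gx gy gz xy yz zx; move: (dist_gt2 gx gy gz xy yz zx); rewrite ltnNge D.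
Qed.

Lemma agents_neq g x y : g x != g y -> x != y.
Proof. by apply: contraNneq => ->. Qed.

Lemma load_balance g h j :
  #|[set a | g a == j] :\: [set a | h a == j]| + load h j =
  #|[set a | h a == j] :\: [set a | g a == j]| + load g j.
Proof.
have E1 := cardsID [set a | g a == j] [set a | h a == j].
have E2 := cardsID [set a | h a == j] [set a | g a == j].
by rewrite setIC in E2; rewrite /load; lia.
Qed.

Lemma load_gain g h j : load g j = load h j + 1 -> exists a, g a = j /\ h a != j.
Proof.
move=> E; have := load_balance g h j; rewrite E => E2.
have /card_gt0P [a] : 0 < #|[set a | g a == j] :\: [set a | h a == j]| by lia.
by rewrite !inE => /andP [hj /eqP gj]; exists a.
Qed.

Lemma load_exit g h j x y :
  load g j <= load h j + 1 -> x != y ->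
  g x = j -> h x != j -> g y = j -> h y != j ->
  exists a, h a = j /\ g a != j.
Proof.
move=> E xy gx hx gy hy; have := load_balance g h j => E2.
have : 1 < #|[set a | g a == j] :\: [set a | h a == j]|.
  by apply/card_gt1P; exists x, y; rewrite !inE gx gy hx hy eqxx.
move=> two; have /card_gt0P [a] : 0 < #|[set a | h a == j] :\: [set a | g a == j]|.
  by lia.
by rewrite !inE => /andP [gj /eqP hj]; exists a.
Qed.

Lemma single_mover g h s t :
  dist g h = 1 -> load h t = load g t + 1 -> load g s = load h s + 1 ->
  exists a, [/\ g a = s, h a = t & forall b, b != a -> h b = g b].
Proof.
move=> /eqP/cards1P [a Da] ht gs.
have others b : b != a -> h b = g b.
  move=> ba; apply/eqP; rewrite eq_sym; apply: contraNT ba => gbh.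
  by rewrite -in_set1 -Da inE.
have [b [hb gb]] := load_gain ht.
have [c [gc hc]] := load_gain gs.
have ab : b = a by apply/eqP; apply: contraNT gb => /others <-; rewrite hb.
have ac : c = a by apply/eqP; apply: contraNT hc => /others ->; rewrite gc.
by exists a; split; [rewrite -ac | rewrite -ab |].
Qed.

(* The two shapes of a transition g -> h that adds one unit of load at t
   and one at r while agents x and y leave their tasks: either x and y
   themselves go to t and r, or both go to t and an agent c of t goes to r. *)
Definition direct g h x y t r :=
  (forall b, b != x -> b != y -> h b = g b) /\
  ((h x = t /\ h y = r) \/ (h x = r /\ h y = t)).

Definition chain g h x y t r :=
  exists c, [/\ g c = t, h c = r, h x = t, h y = t &
              forall b, b != x -> b != y -> b != c -> h b = g b].

Definition transition g h x y t r := direct g h x y t r \/ chain g h x y t r.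

Lemma classify_transition g h mx my x y t r :
  g x != g y -> g x != t -> g y != t -> g x != r -> g y != r -> t != r ->
  mx x = t -> (forall b, b != x -> mx b = g b) ->
  my y = t -> (forall b, b != y -> my b = g b) ->
  load h t = load g t + 1 -> load h r = load g r + 1 ->
  dist h mx <= 2 -> dist h my <= 2 ->
  transition g h x y t r.
Proof.
move=> xy xt yt xr yr tr mxx mxo myy myo lt lr dx dy.
have x_y := agents_neq xy.
have [d [hd gd]] := load_gain lt.
have [e [he ge]] := load_gain lr.
have de : d != e by apply: (agents_neq (g:=h)); rewrite hd he.
(* x leaves its task: otherwise x, d and e are all placed differently by mx *)
have leaves z mz : mz z = t -> (forall b, b != z -> mz b = g b) ->
    dist h mz <= 2 -> g z != t -> g z != r -> h z != g z.
  move=> mzz mzo dz zt zr; apply/negP => /eqP hz.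
  have zd : z != d by apply: (agents_neq (g:=h)); rewrite hz hd.
  have ze : z != e by apply: (agents_neq (g:=h)); rewrite hz he.
  apply: (dist_le2_no_three dz (x:=z) (y:=d) (z:=e)) => //; last by rewrite eq_sym.
  - by rewrite mzz hz.
  - by rewrite hd mzo 1?eq_sym.
  - by rewrite he mzo 1?eq_sym.
have hx := leaves x mx mxx mxo dx xt xr.
have hy := leaves y my myy myo dy yt yr.
case: (pickP [pred b | [&& b != x, b != y & h b != g b]]) => [c /and3P [cx cy hc] | none].
- (* a third agent c moves: then nobody else does, x and y go to t, and c
     is both the agent leaving t and the agent entering r *)
  right.
  have others b : b != x -> b != y -> b != c -> h b = g b.
    move=> bx b_y bc; apply/eqP/negPn/negP => hb.
    by apply: (dist_le2_no_three dx (x:=y) (y:=c) (z:=b));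
      rewrite ?mxo //; rewrite eq_sym.
  have hxt : h x = t.
    apply/eqP/negPn/negP => hxt.
    by apply: (dist_le2_no_three dx (x:=x) (y:=y) (z:=c));
      rewrite ?mxx ?mxo //; rewrite eq_sym.
  have hyt : h y = t.
    apply/eqP/negPn/negP => hyt.
    by apply: (dist_le2_no_three dy (x:=y) (y:=x) (z:=c));
      rewrite ?myy ?myo //; rewrite eq_sym.
  have [c' [gc' hc']] := load_exit (eq_leq lt) x_y hxt xt hyt yt.
  have c'c : c' = c.
    have c'x : c' != x by apply: (agents_neq (g:=g)); rewrite gc' eq_sym.
    have c'y : c' != y by apply: (agents_neq (g:=g)); rewrite gc' eq_sym.
    by apply/eqP; apply: contraNT hc' => c'c; rewrite others ?gc'.
  have ec : e = c.
    have ex : e != x by apply: (agents_neq (g:=h)); rewrite he hxt eq_sym.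
    have ey : e != y by apply: (agents_neq (g:=h)); rewrite he hyt eq_sym.
    by apply/eqP; apply: contraNT ge => ec; rewrite -others ?he.
  by rewrite c'c in gc'; rewrite ec in he; exists c.
- (* only x and y move, so they are the agents entering t and r *)
  left; split.
    by move=> b bx b_y; move: (none b); rewrite /= bx b_y /= => /negbFE/eqP.
  have mover b : h b != g b -> b = x \/ b = y.
    move=> hb; have [|bx] := eqVneq b x; first by left.
    have [|b_y] := eqVneq b y; first by right.
    by move: (none b); rewrite /= bx b_y hb.
  have dxy : d = x \/ d = y by apply: mover; rewrite hd eq_sym.
  have exy : e = x \/ e = y by apply: mover; rewrite he eq_sym.
  move: dxy exy de hd he.
  by case=> ->; case=> ->; rewrite ?eqxx // => _ -> ->; [left | right].
Qed.

Lemma direct_sym g h x y t r : direct g h x y t r -> direct g h y x t r.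
Proof.
case=> fix_h hxy; split=> [b bx b_y|]; first exact: fix_h.
by case: hxy => -[hx hy]; [right | left].
Qed.

Lemma transition_avoids g h x y t r j b :
  transition g h x y t r -> g b != j -> t != j -> r != j -> h b != j.
Proof.
move=> T bj tj rj.
have [->|bx] := eqVneq b x.
  by case: T => [[_ [] [-> _]] | [c [_ _ -> _ _]]].
have [->|b_y] := eqVneq b y.
  by case: T => [[_ [] [_ ->]] | [c [_ _ _ -> _]]].
case: T => [[fix_h _] | [c [_ hc _ _ fix_h]]]; first by rewrite fix_h.
by have [->|bc] := eqVneq b c; rewrite ?hc ?fix_h.
Qed.

Lemma transition_fixed g h x y t r b :
  transition g h x y t r -> g b != g x -> g b != g y -> g b != t -> h b = g b.
Proof.
move=> T gbx gby gbt; have bx := agents_neq gbx; have b_y := agents_neq gby.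
case: T => [[fix_h _] | [c [gc _ _ _ fix_h]]]; first by rewrite fix_h.
by rewrite fix_h // (agents_neq (_ : g b != g c)) ?gc.
Qed.

(* The incompatibilities below all exhibit three agents placed differently by
   two configurations that, in the application, belong to adjacent demand
   vectors. *)
Lemma chain_direct_far g h1 h2 a x y t r :
  g a != g x -> g a != g y -> g x != g y ->
  g a != t -> g x != t -> g y != t -> g y != r -> t != r ->
  chain g h1 a x t r -> direct g h2 x y t r -> 2 < dist h1 h2.
Proof.
move=> ax ay xy a_t xt yt yr tr [c [gc h1c h1a h1x fix1]] [fix2 h2xy].
have ca : c != a by apply: (agents_neq (g:=g)); rewrite gc eq_sym.
have cx : c != x by apply: (agents_neq (g:=g)); rewrite gc eq_sym.
have cy : c != y by apply: (agents_neq (g:=g)); rewrite gc eq_sym.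
have ya : y != a by apply: (agents_neq (g:=g)); rewrite eq_sym.
have yx : y != x by apply: (agents_neq (g:=g)); rewrite eq_sym.
have h2a : h2 a = g a by rewrite fix2 // (agents_neq ax, agents_neq ay).
have h2c : h2 c = t by rewrite fix2 ?gc.
have h1y : h1 y = g y by rewrite fix1 // eq_sym.
apply: (dist_gt2 (x:=a) (y:=c) (z:=y)) => //.
- by rewrite h1a h2a eq_sym.
- by rewrite h1c h2c eq_sym.
- by rewrite h1y; case: h2xy => -[_ ->].
- by rewrite eq_sym.
Qed.

Lemma direct_agree g h1 h2 x y z t r :
  g x != g y -> g x != g z -> g y != g z ->
  g y != t -> g y != r -> g z != t -> g z != r ->
  direct g h1 x y t r -> direct g h2 x z t r -> dist h1 h2 <= 2 -> h1 x = h2 x.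
Proof.
move=> xy xz yz yt yr zt zr [fix1 h1xy] [fix2 h2xz] D.
have y_x : y != x by rewrite eq_sym (agents_neq xy).
have z_x : z != x by rewrite eq_sym (agents_neq xz).
have y_z := agents_neq yz.
have z_y : z != y by rewrite eq_sym.
apply/eqP/negPn/negP => hx.
apply: (dist_le2_no_three D (x:=x) (y:=y) (z:=z)) => //; last by rewrite eq_sym.
- by rewrite (fix2 y) //; case: h1xy => -[_ ->]; rewrite eq_sym.
- by rewrite (fix1 z) //; case: h2xz => -[_ ->].
Qed.

(* Direct transitions around the triangle a1, a2, a3 cannot be consistent:
   each sends one endpoint to t and the other to r. *)
Lemma direct_parity g h12 h13 h23 a1 a2 a3 t r :
  direct g h12 a1 a2 t r -> direct g h13 a1 a3 t r -> direct g h23 a2 a3 t r ->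
  h12 a1 = h13 a1 -> h12 a2 = h23 a2 -> h13 a3 = h23 a3 -> t != r -> False.
Proof.
move=> [_ o12] [_ o13] [_ o23] e1 e2 e3 /eqP tr.
by case: o12 => -[? ?]; case: o13 => -[? ?]; case: o23 => -[? ?]; congruence.
Qed.

Lemma chain_single_far g h hb x y b t r :
  g x != g y -> g x != t -> g y != t -> t != r ->
  g b = g y -> hb b = r -> (forall a, a != b -> hb a = g a) ->
  chain g h x y t r -> 2 < dist h hb.
Proof.
move=> xy xt yt tr gb hbb fixb [c [gc hc hx hy _]].
have xb : x != b by apply: (agents_neq (g:=g)); rewrite gb.
have cb : c != b by apply: (agents_neq (g:=g)); rewrite gb gc eq_sym.
have xc : x != c by apply: (agents_neq (g:=g)); rewrite gc.
have cy : c != y by apply: (agents_neq (g:=g)); rewrite gc eq_sym.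
apply: (dist_gt2 (x:=x) (y:=c) (z:=y)) => //.
- by rewrite hx fixb // eq_sym.
- by rewrite hc fixb // gc eq_sym.
- by rewrite hy; have [->|yb] := eqVneq y b; rewrite ?hbb ?fixb // eq_sym.
- by rewrite eq_sym (agents_neq xy).
Qed.

Lemma chain_retarget_far g h h' x y x' y' t u r :
  g x != g y -> g x != t -> g y != t -> u != t -> r != t ->
  g x' = g x -> g y' = g y ->
  chain g h x y t r -> transition g h' x' y' u r -> 2 < dist h h'.
Proof.
move=> xy xt yt ut rt gx' gy' [c [gc hc hx hy _]] T.
have h'c : h' c = t.
  by rewrite (transition_fixed T) gc // ?gx' ?gy' 1?eq_sym.
apply: (dist_gt2 (x:=c) (y:=x) (z:=y)).
- by rewrite hc h'c.
- by rewrite hx eq_sym (transition_avoids T).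
- by rewrite hy eq_sym (transition_avoids T).
- by apply: (agents_neq (g:=g)); rewrite gc eq_sym.
- exact: agents_neq xy.
- by apply: (agents_neq (g:=g)); rewrite gc.
Qed.

Lemma no_direct_triangle g h12 h13 h23 a1 a2 a3 t r :
  uniq [:: g a1; g a2; g a3; t; r] ->
  transition g h12 a1 a2 t r -> transition g h13 a1 a3 t r ->
  direct g h23 a2 a3 t r ->
  dist h12 h13 <= 2 -> dist h12 h23 <= 2 -> dist h13 h23 <= 2 -> False.
Proof.
rewrite /= !inE !negb_or -!andbA.
case/and5P=> s12 s13 s1t s1r /and5P [s23 s2t s2r s3t /and3P [s3r tr _]].
move=> T12 T13 d23 D12_13 D12_23 D13_23.
have s21 : g a2 != g a1 by rewrite eq_sym.
have s31 : g a3 != g a1 by rewrite eq_sym.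
have s32 : g a3 != g a2 by rewrite eq_sym.
have d12 : direct g h12 a1 a2 t r.
  case: T12 => // ch; have := chain_direct_far s12 s13 s23 s1t s2t s3t s3r tr ch d23.
  by rewrite ltnNge D12_23.
have d13 : direct g h13 a1 a3 t r.
  case: T13 => // ch.
  have := chain_direct_far s13 s12 s32 s1t s3t s2t s2r tr ch (direct_sym d23).
  by rewrite ltnNge D13_23.
apply: (direct_parity d12 d13 d23 _ _ _ tr).
- exact: direct_agree s12 s13 s23 s2t s2r s3t s3r d12 d13 D12_13.
- exact: direct_agree s21 s23 s13 s1t s1r s3t s3r (direct_sym d12) d23 D12_23.
- exact: direct_agree s31 s32 s12 s1t s1r s2t s2r (direct_sym d13) (direct_sym d23) D13_23.
Qed.

End Configurations.

Section DemandVectors.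
Variable k : nat.
Implicit Types (v y z : vec k) (a b c d e j s t : 'I_k).

Definition move2 v a b c d : vec k :=
  [ffun j => v j - (j == a) - (j == b) + (j == c) + (j == d)].

Definition unit_shift y z a b := forall j, z j + (j == a) = y j + (j == b).

Lemma sum_indicator a : \sum_(j < k) (j == a : nat) = 1.
Proof. by rewrite (bigD1 a) //= eqxx big1 // => j /negbTE ->. Qed.

Lemma unit_shift_demand n y z a b :
  unit_shift y z a b -> is_demand n y -> is_demand n z.
Proof.
move=> yz /eqP dy; apply/eqP.
have : \sum_(j < k) (z j + (j == a)) = \sum_(j < k) (y j + (j == b)).
  by apply: eq_bigr => j _; apply: yz.
by rewrite !big_split /= !sum_indicator dy => /addIn.
Qed.

Lemma unit_shift_adjacent y z a b : a != b -> unit_shift y z a b -> adjacent y z.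
Proof.
move=> ab yz; rewrite /adjacent /l1dist.
rewrite (eq_bigr (fun j => (j == a) + (j == b))) ?big_split /= ?sum_indicator //.
move=> j _; have := yz j.
by have [->|ja] := eqVneq j a; rewrite ?(negbTE ab) //=; case: (j == b) => /=; lia.
Qed.

Lemma unit_shift_move v s t : s != t -> 0 < v s -> unit_shift v (move v s t) s t.
Proof.
move=> st vs; have U : uniq [:: s; t] by rewrite /= inE st.
by by_index U.
Qed.

Lemma unit_shift_move2 v a b c d :
  uniq [:: a; b; c; d] -> 0 < v a -> 0 < v b ->
  unit_shift (move v a c) (move2 v a b c d) b d.
Proof. by move=> U *; by_index U. Qed.

Lemma unit_shift_move2_source v a b e c d :
  uniq [:: a; b; e; c; d] -> 0 < v a -> 0 < v b -> 0 < v e ->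
  unit_shift (move2 v a b c d) (move2 v a e c d) e b.
Proof. by move=> U *; by_index U. Qed.

Lemma unit_shift_move2_target v a b c d e :
  uniq [:: a; b; c; d; e] -> 0 < v a -> 0 < v b ->
  unit_shift (move2 v a b c d) (move2 v a b e d) c e.
Proof. by move=> U *; by_index U. Qed.

Lemma move2C v a b c d : move2 v a b c d = move2 v b a c d.
Proof. by apply/ffunP => j; rewrite !ffunE subnAC. Qed.

Lemma move2Ct v a b c d : move2 v a b c d = move2 v a b d c.
Proof. by apply/ffunP => j; rewrite !ffunE addnAC. Qed.

Lemma move2_target v a b c d : c \notin [:: a; b; d] -> move2 v a b c d c = v c + 1.
Proof.
rewrite !inE !negb_or => /and3P [ca cb cd].
by rewrite ffunE eqxx (negbTE ca) (negbTE cb) (negbTE cd) !subn0 addn0.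
Qed.

Lemma move_target v s t : s != t -> move v s t t = v t + 1.
Proof. by move=> st; rewrite ffunE eqxx eq_sym (negbTE st) subn0. Qed.

Lemma move_source v s t : s != t -> 0 < v s -> v s = move v s t s + 1.
Proof. by move=> st vs; rewrite ffunE eqxx (negbTE st) addn0 subnK. Qed.

End DemandVectors.

Section Assignments.
Variables (n k : nat) (f : assignment n k).
Hypothesis demand_f : satisfies_demand f.
Hypothesis cost_f : max_switching_cost_le2 f.
Implicit Types (v y z : vec k) (j s t r : 'I_k) (a b : 'I_n).

Lemma load_demand y j : is_demand n y -> load (f^~ y) j = y j.
Proof. by move=> dy; apply: demand_f. Qed.

Lemma unit_shift_cost y z s t :
  s != t -> is_demand n y -> unit_shift y z s t -> dist (f^~ y) (f^~ z) <= 2.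
Proof.
move=> st dy yz; apply: cost_f => //; first exact: unit_shift_demand yz dy.
exact: unit_shift_adjacent st yz.
Qed.

Lemma move_demand v s t :
  is_demand n v -> s != t -> 0 < v s -> is_demand n (move v s t).
Proof. by move=> dv st vs; apply: unit_shift_demand (unit_shift_move st vs) dv. Qed.

Lemma move2_demand v s s' t r :
  is_demand n v -> uniq [:: s; s'; t; r] -> 0 < v s -> 0 < v s' ->
  is_demand n (move2 v s s' t r).
Proof.
move=> dv U vs vs'; apply: unit_shift_demand (unit_shift_move2 U vs vs') _.
by apply: move_demand; last by []; distinct_from U.
Qed.

Lemma move2_move_cost v s s' t r :
  is_demand n v -> uniq [:: s; s'; t; r] -> 0 < v s -> 0 < v s' ->
  dist (f^~ (move2 v s s' t r)) (f^~ (move v s t)) <= 2.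
Proof.
move=> dv U vs vs'; rewrite dist_sym; apply: (@unit_shift_cost _ _ s' r).
- by distinct_from U.
- by apply: move_demand => //; distinct_from U.
- exact: unit_shift_move2.
Qed.

Lemma move2_target_cost v s s' t t' r :
  is_demand n v -> uniq [:: s; s'; t; r; t'] -> 0 < v s -> 0 < v s' ->
  dist (f^~ (move2 v s s' t' r)) (f^~ (move2 v s s' t r)) <= 2.
Proof.
move=> dv U vs vs'; rewrite dist_sym; apply: (@unit_shift_cost _ _ t t').
- by distinct_from U.
- by apply: move2_demand => //; distinct_from U.
- exact: unit_shift_move2_target.
Qed.

Lemma move2_source_cost v s s' s'' t r :
  is_demand n v -> uniq [:: s; s'; s''; t; r] -> 0 < v s -> 0 < v s' -> 0 < v s'' ->
  dist (f^~ (move2 v s s' t r)) (f^~ (move2 v s s'' t r)) <= 2.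
Proof.
move=> dv U vs vs' vs''; apply: (@unit_shift_cost _ _ s'' s').
- by distinct_from U.
- by apply: move2_demand => //; distinct_from U.
- exact: unit_shift_move2_source.
Qed.

Definition mover v s t a :=
  [/\ f a v = s, f a (move v s t) = t &
      forall b, b != a -> f b (move v s t) = f b v].

Lemma type1_mover v s t :
  is_demand n v -> type1 f v t -> s != t -> 0 < v s -> exists a, mover v s t a.
Proof.
move=> dv ty st vs; have dm := move_demand dv st vs.
apply: single_mover; first exact: ty.
- by rewrite !load_demand // move_target.
- by rewrite !load_demand // -move_source.
Qed.

Lemma pair_transition v s s' t r a a' :
  is_demand n v -> uniq [:: s; s'; t; r] -> 0 < v s -> 0 < v s' ->
  mover v s t a -> mover v s' t a' ->
  transition (f^~ v) (f^~ (move2 v s s' t r)) a a' t r.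
Proof.
move=> dv U vs vs' [fa ma fix_a] [fa' ma' fix_a'].
have dw := move2_demand dv U vs vs'.
have U' : uniq [:: s'; s; t; r] by distinct_from U.
apply: (classify_transition (mx := f^~ (move v s t)) (my := f^~ (move v s' t))) => //;
  rewrite ?fa ?fa'; try by distinct_from U.
- by rewrite !load_demand // move2_target //; distinct_from U.
- by rewrite !load_demand // move2Ct move2_target //; distinct_from U.
- exact: move2_move_cost.
- by rewrite move2C; apply: move2_move_cost dv U' vs' vs.
Qed.

Lemma type1_chain v t s1 s2 s3 r :
  is_demand n v -> type1 f v t -> uniq [:: s1; s2; s3; t; r] ->
  0 < v s1 -> 0 < v s2 -> 0 < v s3 ->
  exists a2 a3, [/\ f a2 v = s2, f a3 v = s3 &
                    chain (f^~ v) (f^~ (move2 v s2 s3 t r)) a2 a3 t r].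
Proof.
move=> dv ty U v1 v2 v3.
have [a1 m1] := type1_mover dv ty (ltac:(distinct_from U) : s1 != t) v1.
have [a2 m2] := type1_mover dv ty (ltac:(distinct_from U) : s2 != t) v2.
have [a3 m3] := type1_mover dv ty (ltac:(distinct_from U) : s3 != t) v3.
have U12 : uniq [:: s1; s2; t; r] by distinct_from U.
have U13 : uniq [:: s1; s3; t; r] by distinct_from U.
have U23 : uniq [:: s2; s3; t; r] by distinct_from U.
have [d23 | ch23] := pair_transition dv U23 v2 v3 m2 m3; last first.
  by case: m2 m3 => [f2 _ _] [f3 _ _]; exists a2, a3.
exfalso; case: (m1) (m2) (m3) => [f1 _ _] [f2 _ _] [f3 _ _].
apply: (no_direct_triangle _ (pair_transition dv U12 v1 v2 m1 m2)
          (pair_transition dv U13 v1 v3 m1 m3) d23).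
- by rewrite f1 f2 f3.
- by apply: move2_source_cost.
- rewrite (move2C v s1 s2); apply: move2_source_cost => //; distinct_from U.
- rewrite (move2C v s1 s3) (move2C v s2 s3).
  by apply: move2_source_cost => //; distinct_from U.
Qed.

Lemma type1_pair_three_others v t1 t2 s1 s2 s3 :
  is_demand n v -> type1 f v t1 -> type1 f v t2 -> uniq [:: s1; s2; s3; t1; t2] ->
  0 < v s1 -> 0 < v s2 -> 0 < v s3 -> False.
Proof.
move=> dv ty1 ty2 U v1 v2 v3.
have [a2 [a3 [f2 f3 ch]]] := type1_chain dv ty1 U v1 v2 v3.
have s3t2 : s3 != t2 by distinct_from U.
have [b [fb mb fix_b]] := type1_mover dv ty2 s3t2 v3.
have far : 2 < dist (f^~ (move2 v s2 s3 t1 t2)) (f^~ (move v s3 t2)).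
  by apply: (chain_single_far _ _ _ _ _ mb fix_b ch); rewrite ?f2 ?f3 ?fb; distinct_from U.
have near : dist (f^~ (move2 v s2 s3 t1 t2)) (f^~ (move v s3 t2)) <= 2.
  by rewrite move2C move2Ct; apply: move2_move_cost => //; distinct_from U.
by rewrite ltnNge near in far.
Qed.

Lemma type1_pair_nonempty v t1 t2 p q r :
  is_demand n v -> type1 f v t1 -> type1 f v t2 -> uniq [:: t2; p; q; t1; r] ->
  0 < v t2 -> 0 < v p -> 0 < v q -> False.
Proof.
move=> dv ty1 ty2 U v2 vp vq.
have [ap [aq [fp fq ch]]] := type1_chain dv ty1 U v2 vp vq.
have [bp mp] := type1_mover dv ty2 (ltac:(distinct_from U) : p != t2) vp.
have [bq mq] := type1_mover dv ty2 (ltac:(distinct_from U) : q != t2) vq.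
have Upq : uniq [:: p; q; t2; r] by distinct_from U.
have far : 2 < dist (f^~ (move2 v p q t1 r)) (f^~ (move2 v p q t2 r)).
  case: (mp) (mq) => [fbp _ _] [fbq _ _].
  apply: (chain_retarget_far _ _ _ _ _ _ _ ch (pair_transition dv Upq vp vq mp mq));
    rewrite ?fp ?fq ?fbp ?fbq //; distinct_from U.
have near : dist (f^~ (move2 v p q t1 r)) (f^~ (move2 v p q t2 r)) <= 2.
  by apply: move2_target_cost => //; distinct_from U.
by rewrite ltnNge near in far.
Qed.

End Assignments.

Theorem lemma4p5 (n k : nat) (f : assignment n k) :
  4 <= n -> 5 <= k ->
  satisfies_demand f ->
  max_switching_cost_le2 f ->
  forall v : vec k, is_demand n v ->
    4 <= #|[set j : 'I_k | 0 < v j]| ->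
    forall t1 t2 : 'I_k, type1 f v t1 -> type1 f v t2 -> t1 = t2.
Proof.
move=> _ k5 demand_f cost_f v dv N4 t1 t2 ty1 ty2.
apply/eqP/negPn/negP => t12.
set N := [set j | 0 < v j] in N4.
have [v20 | v2] := posnP (v t2).
-
  have /card_gt2P [s1 [s2 [s3 [[N1 N2 N3] [s12 s23 s31]]]]] : 2 < #|N :\ t1|.
    by have := cardsD1_lb N t1; lia.
  move: N1 N2 N3; rewrite !inE => /andP [s1t1 v1] /andP [s2t1 v2] /andP [s3t1 v3].
  have not_t2 s : 0 < v s -> s != t2 by apply: contraTneq => ->; rewrite v20.
  have s1t2 := not_t2 _ v1; have s2t2 := not_t2 _ v2; have s3t2 := not_t2 _ v3.
  by apply: (type1_pair_three_others demand_f cost_f dv ty1 ty2 _ v1 v2 v3); distinct.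
-
  have /card_gt1P [p [q [Np Nq pq]]] : 1 < #|N :\ t1 :\ t2|.
    by have := cardsD1_lb N t1; have := cardsD1_lb (N :\ t1) t2; lia.
  move: Np Nq; rewrite !inE => /and3P [pt2 pt1 vp] /and3P [qt2 qt1 vq].
  have [r] : exists r, r \notin [:: t1; t2; p; q] by apply: exists_fresh; rewrite card_ord.
  rewrite !inE !negb_or => /and4P [rt1 rt2 rp rq].
  by apply: (type1_pair_nonempty (r := r) demand_f cost_f dv ty1 ty2 _ v2 vp vq); distinct.
Qed.
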